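(* For any $\epsilon>0$, there is no $(\frac56+\epsilon)$-approximation algorithm for \textsc{MaxUSReco[tjar]} in the value-oracle model making at most $e^{\epsilon^2 n/2}$ oracle calls; i.e., no algorithm that, given value-oracle access to any submodular $f:2^{[n]}\to\mathbb{R}_+$ and any $X,Y\subseteq[n]$, makes at most $e^{\epsilon^2 n/2}$ queries and always outputs a reconfiguration sequence $\mathcal{S}$ from $X$ to $Y$ under tjar with $f(\mathcal{S})\ge(\frac56+\epsilon)f(\mathcal{S}^* )$, where $\mathcal{S}^*$ is an optimal such sequence.
   Context: $f$ is submodular if $f(S)+f(T)\ge f(S\cap T)+f(S\cup T)$. A value oracle returns $f(S)$ on query $S$. Two sets are adjacent under tjar if either they have the same size $s$ and intersection of size $s-1$, or their symmetric difference has size $1$. A reconfiguration sequence from $X$ to $Y$ under tjar is a sequence of sets from $X$ to $Y$ with consecutive sets adjacent; its value is the minimum of $f$ over its sets. \textsc{MaxUSReco[tjar]} asks for such a sequence maximizing the value. *)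

From HB Require Import structures.
From mathcomp Require Import all_boot all_order all_algebra.
From mathcomp Require Import reals sequences exp.
Set Implicit Arguments. Unset Strict Implicit. Unset Printing Implicit Defensive.
Import Order.TTheory GRing.Theory Num.Theory.
Local Open Scope ring_scope.

Section Defs.
Variable R : realType.

Definition submodular n (f : {set 'I_n} -> R) : Prop :=
  forall S T : {set 'I_n}, f (S :&: T) + f (S :|: T) <= f S + f T.

Definition nonneg n (f : {set 'I_n} -> R) : Prop := forall S, 0 <= f S.

Definition tjar_adj n (A B : {set 'I_n}) : bool :=
  ((#|A| == #|B|) && (#|A :&: B|.+1 == #|A|))
  || (#|(A :\: B) :|: (B :\: A)| == 1)%N.

Definition is_reco n (X Y : {set 'I_n}) (S : seq {set 'I_n}) : Prop :=
  exists s, S = X :: s /\ path (@tjar_adj n) X s /\ last X s = Y.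

Definition seqval n (f : {set 'I_n} -> R) (S : seq {set 'I_n}) : R :=
  match S with
  | [::] => 0
  | x :: s => foldr (fun y m => Num.min (f y) m) (f x) s
  end.

(* Deterministic adaptive algorithms in the value-oracle model on [n]:
   decision trees that query f(S) and branch on the answer, or output a
   sequence of sets. *)
Inductive alg (n : nat) : Type :=
| Query : {set 'I_n} -> (R -> alg n) -> alg n
| Output : seq {set 'I_n} -> alg n.

Fixpoint run n (f : {set 'I_n} -> R) (t : alg n) : seq {set 'I_n} * nat :=
  match t with
  | Query Q k => let r := run f (k (f Q)) in (r.1, r.2.+1)
  | Output s => (s, 0%N)
  end.

End Defs.

From HB Require Import structures.
From mathcomp Require Import all_boot all_order all_algebra.
From mathcomp Require Import reals sequences exp.
From mathcomp Require Import lra zify ring.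
Import Order.TTheory GRing.Theory Num.Theory.
Local Open Scope ring_scope.

Set Implicit Arguments. Unset Strict Implicit. Unset Printing Implicit Defensive.

(* On 4h elements split into 2h pairs, let X be the first h pairs
   and Y the last h pairs.  The base function depends only on |S :&: X| and
   |S :&: Y|; since one tjar step changes their difference by at most 2, every
   reconfiguration sequence from X to Y meets a set where they differ by at most
   1, and there the base function is at most (2h)^2 + 1/2.  A hidden sign choosing
   one correct element per pair plants a path from X to Y, and a squared hinge
   bonus on (#correct - #incorrect) lifts the value along that path to about 5h^2.
   For a fixed set the bonus is non-zero for an exponentially small fraction of
   the 2^(2h) signs (Chernoff), so by a union bound some sign hides it from all
   e^(eps^2 n / 2) queries of the algorithm and from the balanced set of its
   output: the algorithm then produces the same sequence on the hidden function,
   which is worth less than 5/6 + eps times the planted path.  For eps > 1/6 the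
   approximation factor exceeds 1, which already fails on the empty ground set. *)

Lemma path_iota (T : Type) (r : rel T) (f : nat -> T) N :
  (forall t, (t < N)%N -> r (f t) (f t.+1)) -> path r (f 0%N) (map f (iota 1 N)).
Proof.
move=> rf; suff : forall k M, (k + M <= N)%N -> path r (f k) (map f (iota k.+1 M)).
  by move/(_ 0%N N); apply.
move=> k M; elim: M k => [|M IH] k kM //=.
by rewrite rf ?IH //; lia.
Qed.

Lemma last_iota k N : last k (iota k.+1 N) = (k + N)%N.
Proof. by elim: N k => [|N IH] k /=; rewrite ?addn0 // IH addnS. Qed.

Lemma natr_double (R : pzSemiRingType) n : n.*2%:R = 2 * n%:R :> R.
Proof. by rewrite -addnn natrD mulr_natl mulr2n. Qed.

Section DecisionTrees.
Variable R : realType.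

Fixpoint queries n (f : {set 'I_n} -> R) (t : alg R n) : seq {set 'I_n} :=
  match t with
  | Query Q k => Q :: queries f (k (f Q))
  | Output _ => [::]
  end.

Lemma size_queries n (f : {set 'I_n} -> R) t : size (queries f t) = (run f t).2.
Proof. by elim: t => [Q k IH|s] //=; rewrite IH. Qed.

Lemma run_eq_on_queries n (f g : {set 'I_n} -> R) t :
  {in queries g t, f =1 g} -> run f t = run g t.
Proof.
elim: t => [Q k IH|s] //= fg.
have -> : f Q = g Q by apply: fg; rewrite mem_head.
by rewrite IH // => Q' HQ'; apply: fg; rewrite inE HQ' orbT.
Qed.

Lemma seqval_le_mem n (f : {set 'I_n} -> R) x s y :
  y \in x :: s -> seqval f (x :: s) <= f y.
Proof.
rewrite /=; elim: s y => [|z s IH] y /=; first by rewrite inE => /eqP ->.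
rewrite !inE => /or3P [/eqP->|/eqP->|Hy]; rewrite ge_min ?lexx //.
- by rewrite IH ?mem_head ?orbT.
- by rewrite IH ?inE ?Hy ?orbT.
Qed.

Lemma seqval_ge n (f : {set 'I_n} -> R) x s c :
  {in x :: s, forall y, c <= f y} -> c <= seqval f (x :: s).
Proof.
rewrite /=; elim: s => [|z s IH] H /=; first by rewrite H ?mem_head.
rewrite le_min H ?inE ?eqxx ?orbT //= IH // => y; rewrite inE => /orP [/eqP->|Hy].
  exact/H/mem_head.
by apply: H; rewrite !inE Hy !orbT.
Qed.

End DecisionTrees.

Section RealFacts.
Variable R : realFieldType.

Lemma path_crossing (T : eqType) (r : rel T) (D : T -> R) x s :
  (forall y z, r y z -> `|D y - D z| <= 2) ->
  path r x s -> -1 < D x -> D (last x s) <= 0 ->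
  exists2 y, y \in x :: s & `|D y| <= 1.
Proof.
move=> Dstep; elim: s x => [|z s IH] x /=.
  by move=> _ *; exists x; rewrite ?mem_head // ler_norml; apply/andP; split; lra.
move=> /andP [xz zs] Dx Dlast.
have [Dx1|Dx1] := lerP (D x) 1.
  by exists x; rewrite ?mem_head // ler_norml; apply/andP; split; lra.
have /andP [_ Dxz] : (- 2 <= D x - D z) && (D x - D z <= 2) by rewrite -ler_norml Dstep.
by have [y ys Dy] := IH z zs ltac:(lra) Dlast; exists y; rewrite // inE ys orbT.
Qed.

(* The hidden bonus: it only rewards a surplus u of correct elements beyond the
   threshold d, which a set chosen without knowledge of the sign rarely reaches. *)
Definition hinge2 (d u : R) : R := if u <= d then 0 else (u - d) ^+ 2 / 2.

Lemma hinge2_ge0 d u : 0 <= hinge2 d u.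
Proof. by rewrite /hinge2; case: ifP => // _; rewrite divr_ge0 ?sqr_ge0. Qed.

Lemma hinge2_ge d u : 0 <= d -> 0 <= u -> (u ^+ 2 - 2 * u * d) / 2 <= hinge2 d u.
Proof.
move=> d0 u0; rewrite /hinge2; case: ifP => ud.
  by rewrite -(mul0r 2^-1) ler_pM2r ?invr_gt0 //; nra.
by rewrite ler_pM2r ?invr_gt0 //; nra.
Qed.

Lemma hinge2_submod d x a b c : 0 <= c -> a * b <= c ->
  hinge2 d x + hinge2 d (x + a + b) <= hinge2 d (x + a) + hinge2 d (x + b) + c.
Proof.
rewrite /hinge2 => c0 abc; case: (lerP x d); case: (lerP (x + a + b) d);
  case: (lerP (x + a) d); case: (lerP (x + b) d); nra.
Qed.

Lemma mul_le_norm_bound (u v p q : R) : `|u| <= p -> `|v| <= q -> u * v <= p * q.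
Proof.
move=> up vq; apply: le_trans (ler_norm _) _.
by rewrite normrM ler_pM ?normr_ge0.
Qed.

End RealFacts.

Section WeightedSums.
Variables (R : realDomainType) (T : finType).
Implicit Types (S U : {set T}) (w : T -> R).

Definition wsum w S : R := \sum_e (e \in S)%:R * w e.

Lemma wsumD w1 w2 S : wsum (fun e => w1 e + w2 e) S = wsum w1 S + wsum w2 S.
Proof. by rewrite /wsum -big_split; apply: eq_bigr => e _; rewrite mulrDr. Qed.

Lemma wsumB w1 w2 S : wsum (fun e => w1 e - w2 e) S = wsum w1 S - wsum w2 S.
Proof. by rewrite /wsum -sumrB; apply: eq_bigr => e _; rewrite mulrBr. Qed.

Lemma wsum_modular w S U : wsum w (S :&: U) + wsum w (S :|: U) = wsum w S + wsum w U.
Proof.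
rewrite /wsum -!big_split; apply: eq_bigr => e _.
by rewrite !inE; case: (e \in S); case: (e \in U) => /=; lra.
Qed.

Lemma wsumB_setI w S U :
  wsum w S - wsum w (S :&: U) = \sum_e ((e \in S)%:R - (e \in S :&: U)%:R) * w e.
Proof. by rewrite /wsum -sumrB; apply: eq_bigr => e _; rewrite mulrBl. Qed.

Lemma memB_setI_ge0 S U e : 0 <= (e \in S)%:R - (e \in S :&: U)%:R :> R.
Proof. by rewrite !inE; case: (e \in S); case: (e \in U) => /=; lra. Qed.

Lemma wsum_setI_le w S U : (forall e, 0 <= w e) -> wsum w (S :&: U) <= wsum w S.
Proof.
move=> w0; rewrite -subr_ge0 wsumB_setI; apply: sumr_ge0 => e _.
by rewrite mulr_ge0 ?memB_setI_ge0.
Qed.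

Lemma wsum_setI_lipschitz w p S U : (forall e, `|w e| <= p e) ->
  `|wsum w S - wsum w (S :&: U)| <= wsum p S - wsum p (S :&: U).
Proof.
move=> wp; rewrite !wsumB_setI; apply: le_trans (ler_norm_sum _ _ _) _.
apply: ler_sum => e _; rewrite normrM ger0_norm ?memB_setI_ge0 //.
by rewrite ler_wpM2l ?memB_setI_ge0.
Qed.

Lemma card_wsum S : #|S|%:R = wsum (fun _ => 1) S.
Proof.
rewrite /wsum -sum1_card natr_sum [RHS](bigID (mem S)) /=.
rewrite [X in _ = _ + X]big1 ?addr0 => [|e /negbTE ->]; last by rewrite mul0r.
by apply: eq_bigr => e ->; rewrite mulr1.
Qed.

End WeightedSums.

Lemma card_symdiff_tjar_adj n (S U : {set 'I_n}) :
  tjar_adj S U -> (#|(S :\: U) :|: (U :\: S)| <= 2)%N.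
Proof.
case/orP => [/andP [/eqP SU /eqP SIU]|/eqP -> //].
by apply: leq_trans (leq_card_setU _ _) _; rewrite !cardsD [U :&: S]setIC; lia.
Qed.

Lemma wsum_tjar_adj (R : realDomainType) n (w : 'I_n -> R) (S U : {set 'I_n}) :
  (forall e, `|w e| <= 1) -> tjar_adj S U -> `|wsum w S - wsum w U| <= 2.
Proof.
move=> w1 SU; rewrite /wsum -sumrB; apply: le_trans (ler_norm_sum _ _ _) _.
apply: (@le_trans _ _ #|(S :\: U) :|: (U :\: S)|%:R); last first.
  by rewrite ler_nat card_symdiff_tjar_adj.
rewrite card_wsum; apply: ler_sum => e _; rewrite -mulrBl normrM mulr1 !inE.
by case: (e \in S); case: (e \in U); rewrite /= ?subrr ?normr0 ?mul0r //
  ?subr0 ?sub0r ?normrN normr1 mul1r.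
Qed.

Section BaseQuad.
Variables (R : realFieldType) (m : R).

(* With a = |S :&: X| and b = |S :&: Y| this is the base function.  Along a path
   with a + b = m it equals m^2/2 + a^2 + b^2, which is only about m^2 near a = b. *)
Definition base_quad (a b : R) : R :=
  a * (m - b) + b * (m - a) + (a + b) * (2 * m - (a + b)) / 2.

Lemma base_quad_ge0 a b : 0 <= a <= m -> 0 <= b <= m -> 0 <= base_quad a b.
Proof. by rewrite /base_quad => /andP [? ?] /andP [? ?]; nra. Qed.

Lemma base_quad_balanced a b : `|a - b| <= 1 -> base_quad a b <= m ^+ 2 + 1 / 2.
Proof.
rewrite ler_norml /base_quad => /andP [? ?].
have := sqr_ge0 (m - (a + b)); have : (b - a) ^+ 2 <= 1 by nra.
nra.
Qed.

Lemma base_quad_submod aI bI pa pb qa qb :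
  0 <= pa -> 0 <= pb -> 0 <= qa -> 0 <= qb ->
  base_quad aI bI + base_quad (aI + pa + qa) (bI + pb + qb) + (pa + pb) * (qa + qb)
  <= base_quad (aI + pa) (bI + pb) + base_quad (aI + qa) (bI + qb).
Proof. by move=> *; rewrite /base_quad; nra. Qed.

End BaseQuad.

Section QuadraticSubmodular.
Variables (R : realType) (n : nat) (m d : R) (wa wb wu : 'I_n -> R).
Hypotheses (wa_ge0 : forall e, 0 <= wa e) (wb_ge0 : forall e, 0 <= wb e).
Hypothesis wu_le : forall e, `|wu e| <= wa e + wb e.

Definition base_fun (S : {set 'I_n}) : R := base_quad m (wsum wa S) (wsum wb S).

Definition hidden_fun (S : {set 'I_n}) : R := base_fun S + hinge2 d (wsum wu S).

Let excess (S U : {set 'I_n}) : R :=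
  wsum (fun e => wa e + wb e) S - wsum (fun e => wa e + wb e) (S :&: U).

Lemma base_fun_submod_gap S U :
  base_fun (S :&: U) + base_fun (S :|: U) + excess S U * excess U S <=
  base_fun S + base_fun U.
Proof.
have aJ := wsum_modular wa S U; have bJ := wsum_modular wb S U.
have aS := wsum_setI_le S U wa_ge0; have aU := wsum_setI_le U S wa_ge0.
have bS := wsum_setI_le S U wb_ge0; have bU := wsum_setI_le U S wb_ge0.
rewrite [U :&: S]setIC in aU bU.
have -> : excess S U * excess U S =
    (wsum wa S - wsum wa (S :&: U) + (wsum wb S - wsum wb (S :&: U))) *
    (wsum wa U - wsum wa (S :&: U) + (wsum wb U - wsum wb (S :&: U))).
  by rewrite /excess [U :&: S]setIC !wsumD; ring.
rewrite /base_fun.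
set aI := wsum wa (S :&: U) in aJ aS aU *; set bI := wsum wb (S :&: U) in bJ bS bU *.
have := base_quad_submod m aI bI (pa := wsum wa S - aI) (pb := wsum wb S - bI)
  (qa := wsum wa U - aI) (qb := wsum wb U - bI).
have addrBK (x y : R) : x + (y - x) = y by ring.
rewrite -[aI + _ + _](_ : wsum wa (S :|: U) = _); last by lra.
rewrite -[bI + _ + _](_ : wsum wb (S :|: U) = _) ?addrBK; last by lra.
by apply; rewrite subr_ge0.
Qed.

Lemma excess_ge0 S U : 0 <= excess S U.
Proof. by rewrite subr_ge0 wsum_setI_le // => e; rewrite addr_ge0. Qed.

Lemma base_fun_submodular : submodular base_fun.
Proof.
move=> S U; have := base_fun_submod_gap S U.
have := mulr_ge0 (excess_ge0 S U) (excess_ge0 U S); lra.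
Qed.

Lemma hidden_fun_submodular : submodular hidden_fun.
Proof.
move=> S U; rewrite /hidden_fun.
have gap := base_fun_submod_gap S U.
have := mul_le_norm_bound (wsum_setI_lipschitz S U wu_le) (wsum_setI_lipschitz U S wu_le).
rewrite -/(excess S U) -/(excess U S) [U :&: S]setIC => hmul.
have := hinge2_submod d (wsum wu (S :&: U)) (mulr_ge0 (excess_ge0 S U) (excess_ge0 U S)) hmul.
have addrBK (x y : R) : x + (y - x) = y by ring.
rewrite -[_ + _ + (_ - _)](_ : wsum wu (S :|: U) = _) ?addrBK; last first.
  by have := wsum_modular wu S U; lra.
lra.
Qed.

End QuadraticSubmodular.

Section PairedSums.
Variable V : nmodType.

Lemma sum_ord_double N (F : nat -> V) :
  \sum_(e < N.*2) F e = \sum_(i < N) (F i.*2 + F i.*2.+1).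
Proof.
rewrite -(big_mkord xpredT F) -(big_mkord xpredT (fun i => F i.*2 + F i.*2.+1)).
elim: N => [|N IH]; first by rewrite !big_geq.
by rewrite doubleS !big_nat_recr //= IH addrA.
Qed.

Lemma sum_nat_halves N (F : nat -> V) :
  \sum_(0 <= i < N.*2) F i = \sum_(0 <= i < N) F i + \sum_(0 <= j < N) F (N + j)%N.
Proof.
rewrite (@big_cat_nat _ _ _ N) //= -?addnn ?leq_addr //; congr (_ + _).
by rewrite -{1}[N]add0n big_addn addnK; apply: eq_bigr => i _; rewrite addnC.
Qed.

End PairedSums.

Lemma sumr_indicator_leq (R : numDomainType) N x :
  \sum_(0 <= i < N) (x <= i)%N%:R = (N - x)%:R :> R.
Proof.
elim: N => [|N IH]; first by rewrite big_geq.
by rewrite big_nat_recr //= IH -natrD; congr (_%:R); case: leqP; lia.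
Qed.

Lemma sumr_indicator_ltn (R : numDomainType) N x :
  \sum_(0 <= i < N) (i < x)%N%:R = (minn x N)%:R :> R.
Proof.
elim: N => [|N IH]; first by rewrite big_geq /minn; case: ltnP.
by rewrite big_nat_recr //= IH -natrD; congr (_%:R); case: ltnP; lia.
Qed.

(* The hard instances live on 4h elements: element e belongs to pair e./2, the
   pairs i < h make up X and the pairs i >= h make up Y.  A sign s declares the
   element 2i + s_i of pair i correct.  The planted path pathset s t, t <= 2h,
   first trades the incorrect X-elements for the correct Y-elements, one per
   step, and then the correct X-elements for the incorrect Y-elements. *)
Section PlantedPath.
Variables (R : realDomainType) (h : nat).
Local Notation n := (h.*2).*2.
Local Notation sign := {ffun 'I_(h.*2) -> bool}.
Implicit Types (s : sign).

(* [bit] extends s by false outside 'I_(2h), so that [correct] is a predicate on nat. *)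
Definition bit s (i : nat) : bool :=
  if insub i is Some j then s j else false.

Lemma bit_ord s (j : 'I_(h.*2)) : bit s j = s j.
Proof. by rewrite /bit valK. Qed.

Definition correct s (e : nat) : bool := odd e == bit s e./2.

Definition path_mem (t i : nat) (c : bool) : bool :=
  if (i < h)%N then (if c then (t - h <= i)%N else (t <= i)%N)
  else (if c then (i - h < t)%N else (i - h < t - h)%N).

Definition pathset s t : {set 'I_n} := [set e : 'I_n | path_mem t e./2 (correct s e)].

Lemma wsum_pairs s (P : nat -> bool -> bool) (F : nat -> bool -> R) (w : 'I_n -> R) :
  (forall e : 'I_n, w e = F e./2 (correct s e)) ->
  wsum w [set e : 'I_n | P e./2 (correct s e)] =
  \sum_(0 <= i < h.*2) ((P i true)%:R * F i true + (P i false)%:R * F i false).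
Proof.
move=> wF; pose G k := (P k./2 (correct s k))%:R * F k./2 (correct s k).
rewrite /wsum (eq_bigr (fun e : 'I_n => G e)) => [|e _]; last by rewrite inE wF.
rewrite (@sum_ord_double _ (h.*2) G) big_mkord.
apply: eq_bigr => i _; rewrite /G /correct /= doubleK uphalf_double odd_double /=.
by case: (bit s i); rewrite //= addrC.
Qed.

Definition wX (e : 'I_n) : R := (e./2 < h)%N%:R.
Definition wY (e : 'I_n) : R := (h <= e./2)%N%:R.
Definition wsign s (e : 'I_n) : R := if correct s e then 1 else -1.

Lemma wsum_wX_pathset s t : (t <= h.*2)%N -> wsum wX (pathset s t) = (h.*2 - t)%:R.
Proof.
move=> th; rewrite (@wsum_pairs s _ (fun i _ => (i < h)%N%:R)) // sum_nat_halves.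
rewrite [X in _ + X]big1 ?addr0 => [|j _]; last by rewrite ltnNge leq_addr /= !mulr0 addr0.
rewrite (eq_big_nat _ _ (F2 := fun i => (t - h <= i)%N%:R + (t <= i)%N%:R)); last first.
  by move=> i /andP [_ ih]; rewrite /path_mem ih !mulr1.
by rewrite big_split /= !sumr_indicator_leq -natrD; congr (_%:R); lia.
Qed.

Lemma wsum_wY_pathset s t : (t <= h.*2)%N -> wsum wY (pathset s t) = t%:R.
Proof.
move=> th; rewrite (@wsum_pairs s _ (fun i _ => (h <= i)%N%:R)) // sum_nat_halves.
rewrite [X in X + _]big1_seq ?add0r => [|i /andP [_]]; last first.
  by rewrite mem_index_iota => /andP [_ ih]; rewrite leqNgt ih !mulr0 addr0.
rewrite (eq_big_nat _ _ (F2 := fun j => (j < t)%N%:R + (j < t - h)%N%:R)); last first.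
  by move=> j _; rewrite /path_mem ltnNge leq_addr /= addKn !mulr1.
by rewrite big_split /= !sumr_indicator_ltn -natrD; congr (_%:R); lia.
Qed.

Lemma wsum_wsign_pathset s t :
  (t <= h.*2)%N -> wsum (wsign s) (pathset s t) = (2 * minn t (h.*2 - t))%:R.
Proof.
move=> th; rewrite (@wsum_pairs s _ (fun _ c => if c then 1 else -1)) // sum_nat_halves.
rewrite [X in X + _](eq_big_nat _ _ (F2 := fun i => (t - h <= i)%N%:R - (t <= i)%N%:R)); last first.
  by move=> i /andP [_ ih]; rewrite /path_mem ih mulr1 mulrN1.
rewrite [X in _ + X](eq_big_nat _ _ (F2 := fun j => (j < t)%N%:R - (j < t - h)%N%:R)); last first.
  by move=> j _; rewrite /path_mem ltnNge leq_addr /= addKn mulr1 mulrN1.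
rewrite !sumrB !sumr_indicator_leq !sumr_indicator_ltn.
have E : (h - (t - h) + minn t h = 2 * minn t (h.*2 - t) + (h - t) + minn (t - h) h)%N by lia.
by move/(congr1 (fun x => x%:R : R)): E; rewrite !natrD => E; lra.
Qed.

Lemma wX_add_wY (e : 'I_n) : wX e + wY e = 1.
Proof. by rewrite /wX /wY; case: (ltnP e./2 h); rewrite ?add0r ?addr0. Qed.

End PlantedPath.

Arguments wX {R h}.
Arguments wY {R h}.
Arguments wsign {R h}.

Lemma card_pathsetI h (s : {ffun 'I_(h.*2) -> bool}) t :
  (t < h.*2)%N -> #|pathset s t :&: pathset s t.+1| = (h.*2).-1.
Proof.
move=> th; apply/eqP; rewrite -(eqr_nat int) card_wsum.
pose P i c := path_mem h t i c && path_mem h t.+1 i c.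
have -> : pathset s t :&: pathset s t.+1 = [set e : 'I_((h.*2).*2) | P e./2 (correct s e)].
  by apply/setP => e; rewrite !inE.
rewrite (@wsum_pairs int h s P (fun _ _ => 1)) // sum_nat_halves /P.
rewrite [X in X + _](eq_big_nat _ _
  (F2 := fun i => (t.+1 - h <= i)%N%:R + (t.+1 <= i)%N%:R)); last first.
  by move=> i /andP [_ ih]; rewrite /path_mem ih !mulr1 !andb_idl // => ?; lia.
rewrite [X in _ + X](eq_big_nat _ _ (F2 := fun j => (j < t)%N%:R + (j < t - h)%N%:R)); last first.
  by move=> j _; rewrite /path_mem ltnNge leq_addr /= addKn !mulr1 !andb_idr // => ?; lia.
by rewrite !big_split /= !sumr_indicator_leq !sumr_indicator_ltn -!natrD eqr_nat; apply/eqP; lia.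
Qed.

Lemma card_pathset h (s : {ffun 'I_(h.*2) -> bool}) t : (t <= h.*2)%N -> #|pathset s t| = h.*2.
Proof.
move=> th; apply/eqP; rewrite -(eqr_nat int) card_wsum.
rewrite (_ : wsum _ _ = wsum (fun e => wX e + wY e :> int) (pathset s t)); last first.
  by apply: eq_bigr => e _; rewrite wX_add_wY.
rewrite wsumD wsum_wX_pathset // wsum_wY_pathset // -natrD eqr_nat.
by apply/eqP; lia.
Qed.

Section PlantedPathSets.
Variable h : nat.
Local Notation n := (h.*2).*2.
Local Notation sign := {ffun 'I_(h.*2) -> bool}.
Implicit Types (s : sign).

Definition Xset : {set 'I_n} := [set e : 'I_n | (e./2 < h)%N].
Definition Yset : {set 'I_n} := [set e : 'I_n | (h <= e./2)%N].

Lemma pathset0 s : pathset s 0 = Xset.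
Proof. by apply/setP => e; rewrite !inE /path_mem; case: ifP; case: correct. Qed.

Lemma pathset_last s : pathset s h.*2 = Yset.
Proof.
apply/setP => e; rewrite !inE /path_mem leqNgt.
have := ltn_ord e; rewrite -ltn_half_double.
by case: ifP => /=; case: correct => //; lia.
Qed.

Lemma card_Xset : #|Xset| = h.*2.
Proof. by rewrite -(pathset0 [ffun => false]) card_pathset. Qed.

Lemma card_Yset : #|Yset| = h.*2.
Proof. by rewrite -(pathset_last [ffun => false]) card_pathset. Qed.

Lemma tjar_adj_pathset s t : (t < h.*2)%N -> tjar_adj (pathset s t) (pathset s t.+1).
Proof.
move=> th; rewrite /tjar_adj card_pathsetI // !card_pathset ?(ltnW th) //; lia.
Qed.

Definition good_path s : seq {set 'I_n} := pathset s 0 :: map (pathset s) (iota 1 h.*2).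

Lemma good_path_reco s : is_reco Xset Yset (good_path s).
Proof.
exists (map (pathset s) (iota 1 h.*2)); rewrite -(pathset0 s); split => //; split.
  by apply: path_iota => t; apply: tjar_adj_pathset.
by rewrite last_map last_iota add0n pathset_last.
Qed.

End PlantedPathSets.

Section HardFunctions.
Variables (R : realType) (h : nat).
Local Notation n := (h.*2).*2.
Local Notation m := (h.*2)%:R.
Local Notation sign := {ffun 'I_(h.*2) -> bool}.
Implicit Types (s : sign) (S : {set 'I_n}) (d : R).

Definition fbase : {set 'I_n} -> R := base_fun m wX wY.
Definition fhide s d : {set 'I_n} -> R := hidden_fun m d wX wY (wsign s).

Lemma wX_ge0 (e : 'I_n) : 0 <= wX e :> R.
Proof. by rewrite /wX; case: ltnP. Qed.

Lemma wY_ge0 (e : 'I_n) : 0 <= wY e :> R.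
Proof. by rewrite /wY; case: leqP. Qed.

Lemma norm_wsign s (e : 'I_n) : `|wsign s e| <= wX e + wY e :> R.
Proof. by rewrite wX_add_wY /wsign; case: correct; rewrite ?normrN normr1. Qed.

Lemma fbase_submodular : submodular fbase.
Proof. exact: base_fun_submodular wX_ge0 wY_ge0. Qed.

Lemma fhide_submodular s d : submodular (fhide s d).
Proof. exact: hidden_fun_submodular wX_ge0 wY_ge0 (norm_wsign s). Qed.

Lemma wsum_wX_bounds S : 0 <= wsum (@wX R h) S <= m.
Proof.
have -> : wsum (@wX R h) S = #|S :&: Xset h|%:R.
  rewrite card_wsum; apply: eq_bigr => e _; rewrite !inE /wX.
  by case: (e \in S); case: ltnP; rewrite ?mulr1 ?mulr0.
by rewrite ler0n ler_nat -[X in (_ <= X)%N]card_Xset subset_leq_card ?subsetIr.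
Qed.

Lemma wsum_wY_bounds S : 0 <= wsum (@wY R h) S <= m.
Proof.
have -> : wsum (@wY R h) S = #|S :&: Yset h|%:R.
  rewrite card_wsum; apply: eq_bigr => e _; rewrite !inE /wY.
  by case: (e \in S); case: leqP; rewrite ?mulr1 ?mulr0.
by rewrite ler0n ler_nat -[X in (_ <= X)%N]card_Yset subset_leq_card ?subsetIr.
Qed.

Lemma fbase_nonneg : nonneg fbase.
Proof. by move=> S; apply: base_quad_ge0; [apply: wsum_wX_bounds|apply: wsum_wY_bounds]. Qed.

Lemma fhide_nonneg s d : nonneg (fhide s d).
Proof. by move=> S; rewrite addr_ge0 ?hinge2_ge0 ?fbase_nonneg. Qed.

Lemma fhide_pathset_ge s d t : (t <= h.*2)%N -> 0 <= d ->
  6 * h%:R ^+ 2 - (2 * h%:R + d) ^+ 2 / 4 <= fhide s d (pathset s t).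
Proof.
move=> th d0; rewrite /fhide /hidden_fun /base_fun /base_quad.
rewrite wsum_wX_pathset // wsum_wY_pathset // wsum_wsign_pathset //.
set x := minn t (h.*2 - t).
have xh : x%:R <= h%:R :> R by rewrite ler_nat /x; lia.
have := hinge2_ge d0 (ler0n _ (2 * x)); rewrite natrM => hx.
have := sqr_ge0 (2 * x%:R - (2 * h%:R + d) / 2 :> R).
rewrite natrB // natr_double.
have [tx|tx] : (t = x \/ t + x = h.*2)%N by rewrite /x; lia.
  by rewrite -tx in hx xh *; nra.
have -> : t%:R = 2 * h%:R - x%:R :> R by rewrite -natr_double -tx natrD addrK.
nra.
Qed.

Lemma good_path_value s d : 0 <= d ->
  6 * h%:R ^+ 2 - (2 * h%:R + d) ^+ 2 / 4 <= seqval (fhide s d) (good_path s).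
Proof.
move=> d0; apply: seqval_ge => y /predU1P [->|/mapP [t]]; first exact: fhide_pathset_ge.
by rewrite mem_iota => /andP [_ th] ->; apply: fhide_pathset_ge => //; lia.
Qed.

Lemma fhide_eq_fbase s d S : wsum (wsign s) S <= d -> fhide s d S = fbase S.
Proof. by rewrite /fhide /hidden_fun /hinge2 => ->; rewrite addr0. Qed.

Lemma fbase_balanced S :
  `|wsum (@wX R h) S - wsum wY S| <= 1 -> fbase S <= m ^+ 2 + 1 / 2.
Proof. exact: base_quad_balanced. Qed.

Lemma reco_balanced T : is_reco (Xset h) (Yset h) T ->
  exists2 S, S \in T & `|wsum (@wX R h) S - wsum wY S| <= 1.
Proof.
pose s0 : sign := [ffun => false].
have X_sub_Y t : (t <= h.*2)%N ->
    wsum (@wX R h) (pathset s0 t) - wsum wY (pathset s0 t) = (h.*2 - t)%:R - t%:R.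
  by move=> th; rewrite wsum_wX_pathset // wsum_wY_pathset.
case=> s [-> [Xs sY]]; apply: (path_crossing (D := fun S => wsum wX S - wsum wY S)) Xs _ _.
- move=> S U SU; rewrite -!wsumB.
  apply: wsum_tjar_adj SU => e; rewrite /wX /wY.
  by case: ltnP; rewrite ?subr0 ?sub0r ?normrN normr1.
- by rewrite -(pathset0 s0) X_sub_Y // subn0 subr0; have := ler0n R h.*2; lra.
- by rewrite sY -(pathset_last s0) X_sub_Y // subnn subr_le0.
Qed.

End HardFunctions.

Section ExpBounds.
Variable R : realType.

Lemma expR_le_inv (r : R) : r < 1 -> expR r <= (1 - r)^-1.
Proof.
move=> r1; rewrite -[r]opprK expRN lef_pV2 ?posrE ?expR_gt0 ?subr_gt0 ?opprK //.
by have := expR_ge1Dx (- r); lra.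
Qed.

Lemma expR_sym_le (rho x : R) : 0 <= rho < 1 -> x = 0 \/ `|x| = 1 ->
  expR (rho * x) + expR (- (rho * x)) <= 2 / (1 - rho ^+ 2).
Proof.
move=> /andP [rho0 rho1] x01; have rho2 : 0 < 1 - rho ^+ 2 by nra.
case: x01 => [->|/eqP]; first by rewrite mulr0 oppr0 expR0 ler_pdivlMr //; nra.
have e1 := expR_le_inv rho1; have e2 := @expR_le_inv (- rho) ltac:(lra).
have E : 2 / (1 - rho ^+ 2) = (1 - rho)^-1 + (1 - - rho)^-1.
  by field; rewrite !lt0r_neq0 //; lra.
by rewrite eqr_norml => /andP [/orP [] /eqP -> _]; rewrite ?mulr1 ?mulrN1 ?opprK E; lra.
Qed.

End ExpBounds.

Section SignTail.
Variables (R : realType) (h : nat).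
Local Notation n := (h.*2).*2.
Local Notation sign := {ffun 'I_(h.*2) -> bool}.
Implicit Types (s : sign) (Q : {set 'I_n}).

Definition mem_nat Q (k : nat) : R := if insub k is Some e then (e \in Q)%:R else 0.

Definition pair_gap Q (i : nat) : R := mem_nat Q i.*2.+1 - mem_nat Q i.*2.

Lemma pair_gap_cases Q i : pair_gap Q i = 0 \/ `|pair_gap Q i| = 1.
Proof.
have mem01 k : mem_nat Q k = 0 \/ mem_nat Q k = 1.
  by rewrite /mem_nat; case: insub => [e|]; [case: (e \in Q); [right|left] | left].
rewrite /pair_gap; case: (mem01 i.*2.+1) => ->; case: (mem01 i.*2) => ->;
  rewrite ?subrr ?subr0 ?sub0r ?normrN ?normr1; auto.
Qed.

Lemma wsum_wsign_pairs s Q :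
  wsum (wsign s) Q = \sum_(i < h.*2) (if s i then pair_gap Q i else - pair_gap Q i).
Proof.
rewrite /wsum (eq_bigr (fun e : 'I_n => mem_nat Q e * (if correct s e then 1 else -1))); last first.
  by move=> e _; rewrite /mem_nat valK.
rewrite (@sum_ord_double _ (h.*2) (fun k => mem_nat Q k * (if correct s k then 1 else -1))).
apply: eq_bigr => i _; rewrite /correct /pair_gap odd_double /= uphalf_double doubleK bit_ord.
by case: (s i); rewrite /= odd_double /=; ring.
Qed.

Lemma sum_expR_wsign Q (rho : R) :
  \sum_s expR (rho * wsum (wsign s) Q) =
  \prod_(i < h.*2) (expR (rho * pair_gap Q i) + expR (- (rho * pair_gap Q i))).
Proof.
pose F (i : 'I_(h.*2)) (b : bool) := expR (rho * (if b then pair_gap Q i else - pair_gap Q i)).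
rewrite (eq_bigr (fun i => \sum_b F i b)) => [|i _]; last by rewrite big_bool /F mulrN.
rewrite bigA_distr_bigA; apply: eq_bigr => s _.
by rewrite wsum_wsign_pairs mulr_sumr expR_sum; apply: eq_bigr => i _; rewrite /F; case: (s i).
Qed.

(* Chernoff bound: dominate the indicator by expR (rho * (wsum (wsign s) Q - d)). *)
Lemma sum_wsign_gt_le Q (rho d : R) : 0 <= rho < 1 ->
  \sum_s (d < wsum (wsign s) Q)%R%:R <= expR (- (rho * d)) * (2 / (1 - rho ^+ 2)) ^+ h.*2.
Proof.
move=> rho01; have /andP [rho0 _] := rho01.
apply: (@le_trans _ _ (\sum_s expR (- (rho * d)) * expR (rho * wsum (wsign s) Q))).
  apply: ler_sum => s _; rewrite -expRD; case: ltP => /= [gt|_]; last exact: expR_ge0.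
  by apply: le_trans (expR_ge1Dx _); rewrite lerDl; nra.
rewrite -mulr_sumr sum_expR_wsign ler_pM2l ?expR_gt0 //.
apply: (@le_trans _ _ (\prod_(i < h.*2) (2 / (1 - rho ^+ 2)))); last first.
  by rewrite prodr_const card_ord.
apply: ler_prod => i _; rewrite addr_ge0 ?expR_ge0 //=.
exact/expR_sym_le/pair_gap_cases.
Qed.

End SignTail.

Lemma union_bound (R : realDomainType) (T : Type) (I : finType) (Qs : seq T)
    (bad : T -> I -> bool) :
  \sum_(Q <- Qs) \sum_s (bad Q s)%:R < #|I|%:R :> R ->
  exists s, all (fun Q => ~~ bad Q s) Qs.
Proof.
case: (pickP (fun s => all (fun Q => ~~ bad Q s) Qs)) => [s good _|none]; first by exists s.
rewrite ltNge => /negP []; rewrite exchange_big /= -sum1_card natr_sum.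
apply: ler_sum => s _.
have -> : \sum_(Q <- Qs) (bad Q s)%:R = (count (bad^~ s) Qs)%:R :> R.
  by rewrite -sum1_count natr_sum [RHS]big_mkcond; apply: eq_bigr => Q _; case: (bad Q s).
have : ~~ all (fun Q => ~~ bad Q s) Qs by rewrite none.
by rewrite -has_predC has_count ler1n (eq_count (a2 := bad^~ s)) // => Q /=; rewrite negbK.
Qed.

Section Numerics.
Variable R : realType.

Lemma invr_one_sub_sqr_le (e : R) : 0 < e <= 1 / 6 -> (1 - e ^+ 2)^-1 <= expR (36 / 35 * e ^+ 2).
Proof.
move=> /andP [e0 e1]; have e2 : 0 < 1 - e ^+ 2 by nra.
have -> : (1 - e ^+ 2)^-1 = 1 + e ^+ 2 / (1 - e ^+ 2) by field; rewrite lt0r_neq0.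
apply: le_trans (expR_ge1Dx _); rewrite lerD2l ler_pdivrMr //.
have : e ^+ 2 <= 1 / 36 by nra.
have := sqr_ge0 e; nra.
Qed.

Lemma query_budget_small (K h : nat) (e : R) : 0 < e <= 1 / 6 -> 7 / e ^+ 2 < h%:R ->
  K%:R <= expR (e ^+ 2 * ((h.*2).*2)%:R / 2) ->
  K.+1%:R * (expR (- (e * (21 / 5 * e * h%:R))) * (2 / (1 - e ^+ 2)) ^+ h.*2) < (2 ^ h.*2)%:R.
Proof.
move=> e01 he K_le; have /andP [e0 e1] := e01; have e2 : 0 < 1 - e ^+ 2 by nra.
have h2 := natr_double R h.
have h4 : h.*2.*2%:R = 4 * h%:R :> R by rewrite !natr_double mulrA -natrM.
(* The constants 36/35 and 21/5 make the exponents add up to - e^2 h / 7. *)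
have K1_le : K.+1%:R <= 2 * expR (e ^+ 2 * (4 * h%:R) / 2).
  rewrite -h4 -natr1; have : 1 <= expR (e ^+ 2 * h.*2.*2%:R / 2).
    apply: le_trans (expR_ge1Dx _); rewrite lerDl.
    by apply: divr_ge0 => //; rewrite mulr_ge0 ?sqr_ge0.
  lra.
have pow_le : (2 / (1 - e ^+ 2)) ^+ h.*2 <= 2 ^+ h.*2 * expR (h.*2%:R * (36 / 35 * e ^+ 2)).
  rewrite expRM_natl -exprMn; apply: lerXn2r; rewrite ?nnegrE ?mulr_ge0 ?expR_ge0 //.
    by rewrite invr_ge0 ltW.
  by rewrite ler_pM2l // invr_one_sub_sqr_le.
have decay : 2 * expR (- (e ^+ 2 * h%:R / 7)) < 1.
  rewrite expRN -ltr_pdivlMl // mulr1 ltf_pV2 ?posrE ?expR_gt0 //.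
  apply: lt_le_trans (expR_ge1Dx _); rewrite -ltrBlDl.
  by move: he; rewrite ltr_pdivrMr ?exprn_gt0 //; lra.
rewrite natrX; apply: le_lt_trans (ler_pM (ler0n _ _) _ K1_le (ler_pM _ _ (lexx _) pow_le)) _.
- by rewrite mulr_ge0 ?expR_ge0 ?exprn_ge0 ?divr_ge0 ?ltW.
- exact: expR_ge0.
- by rewrite exprn_ge0 ?divr_ge0 ?ltW.
set A := e ^+ 2 * _ / 2; set B := - _; set C := _ * (36 / 35 * _).
have -> : 2 * expR A * (expR B * (2 ^+ h.*2 * expR C)) = 2 ^+ h.*2 * (2 * expR (A + B + C)).
  by rewrite !expRD; ring.
have -> : A + B + C = - (e ^+ 2 * h%:R / 7) by rewrite /A /B /C h2; field.
by rewrite -[X in _ < X]mulr1 ltr_pM2l ?exprn_gt0.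
Qed.

Lemma approx_gap (e H : R) : 0 < e <= 1 / 6 -> 2 <= H ->
  (2 * H) ^+ 2 + 1 / 2 < (5 / 6 + e) * (6 * H ^+ 2 - (2 * H + 21 / 5 * e * H) ^+ 2 / 4).
Proof.
move=> /andP [e0 e1] H2.
have : 1 / 6 <= (5 / 6 + e) * (6 - (1 + 21 / 10 * e) ^+ 2) - 4.
  have t1 : e ^+ 2 <= e / 6 by nra.
  have t2 : e ^+ 3 <= e / 36 by rewrite exprS; nra.
  have t3 : 0 <= e ^+ 3 by rewrite exprn_ge0 ?ltW.
  rewrite exprS in t2 t3; nra.
have -> : (5 / 6 + e) * (6 * H ^+ 2 - (2 * H + 21 / 5 * e * H) ^+ 2 / 4) =
    H ^+ 2 * ((5 / 6 + e) * (6 - (1 + 21 / 10 * e) ^+ 2)) by rewrite !expr2; field.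
have : 4 <= H ^+ 2 by nra.
nra.
Qed.

End Numerics.

Lemma is_reco_single n (X : {set 'I_n}) : is_reco X X [:: X].
Proof. by exists [::]. Qed.

Lemma seqval_const (R : realType) n (c : R) (x : {set 'I_n}) s :
  seqval (fun _ => c) (x :: s) = c.
Proof. by elim: s => //= y s ->; rewrite minxx. Qed.

Section Adversary.
Variables (R : realType) (eps : R) (h : nat).
Hypotheses (eps_gt0 : 0 < eps) (eps_le : eps <= 1 / 6) (h_large : 7 / eps ^+ 2 < h%:R).
Local Notation n := (h.*2).*2.
Local Notation sign := {ffun 'I_(h.*2) -> bool}.
Let d := 21 / 5 * eps * h%:R.

Lemma exists_sign_hiding (Q0 : {set 'I_n}) Qs :
  (size Qs)%:R <= expR (eps ^+ 2 * n%:R / 2) ->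
  exists s : sign, {in Q0 :: Qs, forall Q, wsum (wsign s) Q <= d}.
Proof.
move=> Qs_small; pose bad Q (s : sign) := (d < wsum (wsign s) Q)%R.
have /union_bound [s /allP good] : \sum_(Q <- Q0 :: Qs) \sum_s (bad Q s)%:R < #|sign|%:R :> R.
  have eps01 : 0 <= eps < 1 by rewrite ltW //=; apply: le_lt_trans eps_le _; lra.
  apply: le_lt_trans (ler_sum _ (fun Q _ => sum_wsign_gt_le Q d eps01)) _.
  rewrite big_const_seq count_predT iter_addr addr0 -[_ *+ size _]mulr_natl.
  rewrite card_ffun card_bool card_ord.
  by apply: query_budget_small; rewrite ?eps_gt0.
by exists s => Q /good; rewrite -leNgt.
Qed.

Lemma adversary_defeats (t : alg R n) :
  (run (@fbase R h) t).2%:R <= expR (eps ^+ 2 * n%:R / 2) ->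
  is_reco (Xset h) (Yset h) (run (@fbase R h) t).1 ->
  exists s : sign, run (fhide s d) t = run (@fbase R h) t /\
    seqval (fhide s d) (run (@fbase R h) t).1 <= (h.*2)%:R ^+ 2 + 1 / 2.
Proof.
move=> budget reco; have [S S_out S_bal] := reco_balanced R reco.
have [s hide] := @exists_sign_hiding S (queries (@fbase R h) t) ltac:(by rewrite size_queries).
have agree : {in S :: queries (@fbase R h) t, fhide s d =1 @fbase R h}.
  by move=> Q /hide; apply: fhide_eq_fbase.
exists s; split; first by apply: run_eq_on_queries => Q Qq; rewrite agree // inE Qq orbT.
case: reco S_out => s' [-> _] S_out.
by apply: le_trans (seqval_le_mem _ S_out) _; rewrite agree ?mem_head ?fbase_balanced.
Qed.

End Adversary.

Theorem mainTheorem14 (R : realType) (eps : R) (heps : 0 < eps) :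
  ~ exists A : forall n : nat, {set 'I_n} -> {set 'I_n} -> alg R n,
      forall (n : nat) (f : {set 'I_n} -> R),
        nonneg f -> submodular f ->
        forall X Y : {set 'I_n},
          let r := run f (A n X Y) in
          (r.2%:R <= expR (eps ^+ 2 * n%:R / 2)) /\
          is_reco X Y r.1 /\
          (forall T, is_reco X Y T -> (5 / 6 + eps) * seqval f T <= seqval f r.1).
Proof.
move=> [A HA].
have [eps_big|eps_le] := ltrP (1 / 6) eps.
  have [_ [[s [-> _]] approx]] := HA 0%N (fun=> 1) (fun=> ler01) (fun _ _ => lexx _) set0 set0.
  by have := approx _ (is_reco_single set0); rewrite !seqval_const; lra.
have eps01 : 0 < eps <= 1 / 6 by rewrite heps.
have [h [h_large h_ge2]] : exists h : nat, 7 / eps ^+ 2 < h%:R /\ 2 <= h%:R :> R.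
  exists (Num.bound (7 / eps ^+ 2)).+2; split; last by rewrite ler_nat.
  apply: lt_le_trans (archi_boundP _) _; first by rewrite divr_ge0 ?sqr_ge0.
  by rewrite ler_nat; lia.
pose d := 21 / 5 * eps * h%:R; have d_ge0 : 0 <= d by rewrite /d; have := ler0n R h; nra.
have [budget [reco _]] :=
  HA _ (@fbase R h) (@fbase_nonneg R h) (@fbase_submodular R h) (Xset h) (Yset h).
have [s [same low]] := adversary_defeats heps eps_le h_large budget reco.
have [_ [_ approx]] :=
  HA _ (fhide s d) (fhide_nonneg s d) (fhide_submodular s d) (Xset h) (Yset h).
have := approx _ (good_path_reco s); rewrite same.
have c_ge0 : 0 <= 5 / 6 + eps by lra.
have := ler_wpM2l c_ge0 (good_path_value s d_ge0).
have := approx_gap eps01 h_ge2; rewrite -/d.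
by rewrite natr_double -/d in low; lra.
Qed.
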